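(* Every free quandle is right orderable and semi-latin.
   Context: A quandle is a non-empty set $Q$ with a binary operation $*$ such that $x*x=x$ for all $x$; for all $x,y$ there is a unique $z$ with $x=z*y$; and $(x*y)*z=(x*z)*(y*z)$ for all $x,y,z$. The free quandle on a set $S$ is the quandle $FQ(S)$ with a map $S\to FQ(S)$ satisfying the usual universal property among quandles (equivalently: the set of symbols $a^w$, $a\in S$, $w$ in the free group $F(S)$, with $a^w*b^u=a^{wu^{-1}bu}$, modulo the equivalence relation generated by $a^w=a^{aw}$). A quandle $Q$ is right orderable if there is a linear order $<$ on $Q$ such that $x<y$ implies $x*z<y*z$ for all $x,y,z\in Q$. A quandle $Q$ is semi-latin if for each $x\in Q$ the map $L_x:Q\to Q$, $L_x(y)=x*y$, is injective. *)

Record quandle := Quandle {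
  qcar :> Type;
  qop : qcar -> qcar -> qcar;
  q_nonempty : inhabited qcar;
  q_idem : forall x, qop x x = x;
  q_rdiv : forall x y, exists! z, x = qop z y;
  q_rdist : forall x y z, qop (qop x y) z = qop (qop x z) (qop y z)
}.

Definition quandle_hom (Q1 Q2 : quandle) (f : Q1 -> Q2) : Prop :=
  forall x y, f (qop Q1 x y) = qop Q2 (f x) (f y).

Definition is_free_quandle (S : Type) (Q : quandle) (i : S -> Q) : Prop :=
  forall (Q' : quandle) (f : S -> Q'),
    exists g : Q -> Q',
      quandle_hom Q Q' g /\ (forall s, g (i s) = f s) /\
      (forall g' : Q -> Q', quandle_hom Q Q' g' -> (forall s, g' (i s) = f s) ->
         forall x, g' x = g x).

Definition strict_linear_order (T : Type) (lt : T -> T -> Prop) : Prop :=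
  (forall x, ~ lt x x) /\
  (forall x y z, lt x y -> lt y z -> lt x z) /\
  (forall x y, lt x y \/ x = y \/ lt y x).

Definition right_orderable (Q : quandle) : Prop :=
  exists lt : Q -> Q -> Prop, strict_linear_order Q lt /\
    forall x y z, lt x y -> lt (qop Q x z) (qop Q y z).

Definition semi_latin (Q : quandle) : Prop :=
  forall x y1 y2 : Q, qop Q x y1 = qop Q x y2 -> y1 = y2.

(* The Magnus map [a |-> 1 + a] sends the free quandle on [S] to the conjugation quandle
   [y^-1 x y] of the group of invertible series with constant term 1 in Z<<S>>.
   This map is injective.  Every element of a free quandle has the form a^v (the
   generator a acted on by a word v), with image (1 + a)^(M v).  If a^v and b^w have the
   same image then a = b (compare coefficients of degree one), and M (v w^-1) commutes
   with 1 + a.  A word whose Magnus image commutes with 1 + a is equal in the free group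
   to a power of a: strip trailing powers of a and reduce; a nonempty reduced word not
   ending in a cannot commute, because the coefficient of a followed by its skeleton
   (its sequence of letters) differs on the two sides.  Hence a^v = a^w.
   Ordering series by the sign of their leading coefficient (shortest words first, ties
   broken by a well-order on words) is invariant under multiplication on either side by
   series with constant term 1, hence under conjugation, and pulls back to a right order
   on the free quandle.  Finally, if x * y1 = x * y2 then the image of y1 y2^-1
   commutes with that of x, so it is conjugate to a power of a generator; comparing
   exponent sums shows that this power is trivial, so y1 = y2. *)

From Stdlib Require Import List ZArith Lia Relations Wf_nat Classical ClassicalEpsilon
  FunctionalExtensionality ProofIrrelevance.
From mathcomp Require ssreflect ssrbool eqtype boolp wochoice.
Import ListNotations.
Open Scope Z_scope.

Module WellOrder.
Import ssreflect ssrbool eqtype boolp wochoice.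

Lemma well_order_exists (T : Type) : exists R : T -> T -> Prop,
  (forall x y, R x y \/ R y x) /\ (forall x y, R x y -> R y x -> x = y) /\
  (forall x y z, R x y -> R y z -> R x z) /\
  (forall P : T -> Prop, (exists x, P x) -> exists m, P m /\ forall x, P x -> R m x).
Proof.
  case: (well_ordering_principle {classic T}) => R HR.
  have memP (P : T -> Prop) (x : {classic T}) :
      x \in [pred y : {classic T} | `[< P y >]] <-> P x.
    by rewrite inE; split => /asboolP.
  have minP (P : T -> Prop) : (exists x, P x) -> exists m, P m /\ forall x, P x -> R m x.
    move=> [x Px]; have [|m [[/memP Pm lb] _]] := HR [pred y : {classic T} | `[< P y >]].
      by exists x; apply/memP.
    by exists m; split=> // y Py; apply: lb; apply/memP.
  have total_R x y : R x y \/ R y x.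
    have [|m [[->|->] lb]] := minP (fun z => z = x \/ z = y); first by exists x; left.
      by left; apply: lb; right.
    by right; apply: lb; left.
  have anti_R x y : R x y -> R y x -> x = y.
    move=> Rxy Ryx; have [|m [_ U]] := HR [pred z : {classic T} | `[< z = x \/ z = y >]].
      by exists x; apply/memP; left.
    have minimum z : z = x \/ z = y -> minimum_of R [pred z | `[< z = x \/ z = y >]] z.
      move=> Hz; split; first exact/memP.
      have refl_R w : R w w by case: (total_R w w).
      by move=> w /memP [->|->]; case: Hz => ->.
    rewrite -(U x (minimum x (or_introl Logic.eq_refl))).
    exact: U y (minimum y (or_intror Logic.eq_refl)).
  exists (fun x y => R x y = true); split=> //; split=> //; split=> // x y z Rxy Ryz.
  have [|m [[->|[->|->]] lb]] := minP (fun w => w = x \/ w = y \/ w = z).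
  - by exists x; left.
  - by apply: lb; auto.
  - by rewrite (anti_R x y Rxy (lb x (or_introl Logic.eq_refl))).
  - by rewrite -(anti_R y z Ryz (lb y (or_intror (or_introl Logic.eq_refl)))).
Qed.

End WellOrder.

(* Non-commutative formal power series over [Z], as coefficient functions on words. *)
Definition series (S : Type) := list S -> Z.

Section Series.
Context {A : Type}.
Implicit Types (p q r : series A) (t u v : list A).

Definition one : series A := fun t => match t with [] => 1 | _ => 0 end.
Definition lquot (x : A) p : series A := fun u => p (x :: u).
Definition ssub p q : series A := fun t => p t - q t.

Fixpoint smul p q t {struct t} : Z :=
  match t with
  | [] => p [] * q []
  | x :: t' => p [] * q (x :: t') + smul (lquot x p) q t'
  end.

Lemma smul_nil p q : smul p q [] = p [] * q [].
Proof. reflexivity. Qed.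

Lemma smul_cons p q x t : smul p q (x :: t) = p [] * q (x :: t) + smul (lquot x p) q t.
Proof. reflexivity. Qed.

Lemma smul_single p q c : smul p q [c] = p [] * q [c] + p [c] * q [].
Proof. reflexivity. Qed.

Lemma smul_linear_l a b p p' q t :
  smul (fun u => a * p u + b * p' u) q t = a * smul p q t + b * smul p' q t.
Proof.
  revert p p'; induction t as [|x t IH]; intros p p'; cbn [smul].
  - ring.
  - specialize (IH (lquot x p) (lquot x p')). unfold lquot in *. rewrite IH. ring.
Qed.

Lemma smul_linear_r a b p q q' t :
  smul p (fun u => a * q u + b * q' u) t = a * smul p q t + b * smul p q' t.
Proof.
  revert p; induction t as [|x t IH]; intros p; cbn [smul].
  - ring.
  - rewrite IH. ring.
Qed.

Lemma smul_vanish_l p q t : (forall u, p u = 0) -> smul p q t = 0.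
Proof.
  revert p; induction t as [|x t IH]; intros p Hp; cbn [smul]; rewrite Hp.
  - reflexivity.
  - rewrite IH; [reflexivity|]. intros u. apply Hp.
Qed.

Lemma smul_one_l q : smul one q = q.
Proof.
  apply functional_extensionality; intros [|x t]; cbn [smul one].
  - ring.
  - rewrite smul_vanish_l; [ring|reflexivity].
Qed.

Lemma smul_one_r p : smul p one = p.
Proof.
  apply functional_extensionality; intro t; revert p.
  induction t as [|x t IH]; intros p; cbn [smul one].
  - ring.
  - rewrite IH. unfold lquot. ring.
Qed.

Lemma smul_assoc p q r : smul (smul p q) r = smul p (smul q r).
Proof.
  apply functional_extensionality; intro t; revert p.
  induction t as [|x t IH]; intros p.
  - rewrite !smul_nil. ring.
  - assert (E : lquot x (smul p q) = fun u => p [] * lquot x q u + 1 * smul (lquot x p) q u).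
    { apply functional_extensionality; intro u. unfold lquot at 1.
      rewrite smul_cons. unfold lquot. ring. }
    rewrite !smul_cons, E, smul_linear_l, IH, smul_nil. ring.
Qed.

Lemma smul_sub_l p p' q : smul (ssub p p') q = ssub (smul p q) (smul p' q).
Proof.
  apply functional_extensionality; intro t. unfold ssub.
  replace (fun u => p u - p' u) with (fun u => 1 * p u + (-1) * p' u)
    by (apply functional_extensionality; intros; ring).
  rewrite smul_linear_l. ring.
Qed.

Lemma smul_sub_r p q q' : smul p (ssub q q') = ssub (smul p q) (smul p q').
Proof.
  apply functional_extensionality; intro t. unfold ssub.
  replace (fun u => q u - q' u) with (fun u => 1 * q u + (-1) * q' u)
    by (apply functional_extensionality; intros; ring).
  rewrite smul_linear_r. ring.
Qed.

Lemma smul_neq0_split p q t :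
  smul p q t <> 0 -> exists u v, t = u ++ v /\ p u <> 0 /\ q v <> 0.
Proof.
  revert p; induction t as [|x t IH]; intros p H.
  - exists [], []. split; [reflexivity|]. rewrite smul_nil in H. lia.
  - rewrite smul_cons in H.
    destruct (Z.eq_dec (p [] * q (x :: t)) 0) as [E|E].
    + destruct (IH (lquot x p)) as [u [v [-> Huv]]]; [lia|].
      exists (x :: u), v. auto.
    + exists [], (x :: t). split; [reflexivity|]. lia.
Qed.

Lemma smul_low_l p q t :
  (forall s, (length s < length t)%nat -> p s = 0) -> smul p q t = p t * q [].
Proof.
  revert p; induction t as [|x t IH]; intros p H.
  - reflexivity.
  - rewrite smul_cons, IH, (H []) by (simpl; lia || (intros s Hs; apply H; simpl; lia)).
    reflexivity.
Qed.

Lemma smul_low_r p q t :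
  (forall s, (length s < length t)%nat -> q s = 0) -> smul p q t = p [] * q t.
Proof.
  revert p; induction t as [|x t IH]; intros p H.
  - reflexivity.
  - rewrite smul_cons, IH, (H t) by (simpl; lia || (intros s Hs; apply H; simpl; lia)).
    ring.
Qed.

End Series.

Section IntegerIteration.
Context {X : Type} (f g : X -> X).
Hypotheses (fg : forall x, f (g x) = x) (gf : forall x, g (f x) = x).

Definition ziter (n : Z) (x : X) : X :=
  match n with
  | Z0 => x
  | Zpos k => Nat.iter (Pos.to_nat k) f x
  | Zneg k => Nat.iter (Pos.to_nat k) g x
  end.

Lemma ziter_of_nat k x : ziter (Z.of_nat k) x = Nat.iter k f x.
Proof. destruct k; [reflexivity|]. simpl. rewrite SuccNat2Pos.id_succ. reflexivity. Qed.

Lemma ziter_opp_of_nat k x : ziter (- Z.of_nat k) x = Nat.iter k g x.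
Proof. destruct k; [reflexivity|]. simpl. rewrite SuccNat2Pos.id_succ. reflexivity. Qed.

Lemma ziter_succ n x : ziter (Z.succ n) x = f (ziter n x).
Proof.
  destruct (Z_le_gt_dec 0 n) as [Hn|Hn].
  - replace n with (Z.of_nat (Z.to_nat n)) by lia.
    rewrite <- Nat2Z.inj_succ, !ziter_of_nat. reflexivity.
  - replace n with (- Z.of_nat (S (Z.to_nat (- n - 1)))) by lia.
    replace (Z.succ _) with (- Z.of_nat (Z.to_nat (- n - 1))) by lia.
    rewrite !ziter_opp_of_nat. simpl. rewrite fg. reflexivity.
Qed.

Lemma ziter_pred n x : ziter (Z.pred n) x = g (ziter n x).
Proof.
  rewrite <- (Z.succ_pred n) at 2. rewrite ziter_succ, gf. reflexivity.
Qed.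

Lemma ziter_add m n x : ziter (m + n) x = ziter m (ziter n x).
Proof.
  induction m using Z.peano_ind.
  - reflexivity.
  - rewrite Z.add_succ_l, !ziter_succ, IHm. reflexivity.
  - rewrite Z.add_pred_l, !ziter_pred, IHm. reflexivity.
Qed.

End IntegerIteration.

Definition decide_eq {S : Type} (a b : S) : {a = b} + {a <> b} :=
  excluded_middle_informative (a = b).

Section MagnusGenerators.
Context {A : Type}.
Implicit Types (a b c x : A) (p q : series A) (t u : list A).

(* The Magnus image [1 + a] of a generator, and its inverse [1 - a + a^2 - ...]. *)
Definition mag a : series A := fun t =>
  match t with [] => 1 | [b] => if decide_eq b a then 1 else 0 | _ => 0 end.

Fixpoint mag_inv a t : Z :=
  match t with [] => 1 | b :: t' => if decide_eq b a then - mag_inv a t' else 0 end.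

Lemma smul_opp_l p q t : smul (fun u => - p u) q t = - smul p q t.
Proof.
  replace (fun u => - p u) with (fun u => -1 * p u + 0 * p u)
    by (apply functional_extensionality; intros; ring).
  rewrite smul_linear_l. ring.
Qed.

Lemma smul_mag_l_cons a q x t :
  smul (mag a) q (x :: t) = q (x :: t) + (if decide_eq x a then q t else 0).
Proof.
  rewrite smul_cons. change (mag a []) with 1.
  destruct (decide_eq x a) as [->|Hx].
  - replace (lquot a (mag a)) with (@one A).
    + rewrite smul_one_l. ring.
    + apply functional_extensionality; intros [|y u]; cbn;
        destruct (decide_eq a a); congruence.
  - rewrite smul_vanish_l; [ring|].
    intros [|y u]; cbn; [destruct (decide_eq x a); congruence | reflexivity].
Qed.

Lemma mag_mag_inv a : smul (mag a) (mag_inv a) = one.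
Proof.
  apply functional_extensionality; intros [|x t]; [reflexivity|].
  rewrite smul_mag_l_cons. cbn. destruct (decide_eq x a); ring.
Qed.

Lemma mag_inv_mag a : smul (mag_inv a) (mag a) = one.
Proof.
  apply functional_extensionality; intros t; induction t as [|x t IH]; [reflexivity|].
  rewrite smul_cons. unfold lquot. cbn [mag_inv].
  destruct (decide_eq x a) as [->|Hx].
  - rewrite smul_opp_l, IH.
    destruct t; cbn; destruct (decide_eq a a); congruence || ring.
  - rewrite smul_vanish_l by reflexivity.
    destruct t; cbn; destruct (decide_eq x a); congruence || ring.
Qed.

Lemma mag_support a t : mag a t <> 0 -> Forall (eq a) t.
Proof.
  destruct t as [|x [|y t]]; cbn; intros H; try congruence; [constructor|].
  destruct (decide_eq x a); [subst; repeat constructor | congruence].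
Qed.

Lemma mag_inv_support a t : mag_inv a t <> 0 -> Forall (eq a) t.
Proof.
  induction t as [|x t IH]; cbn; intros H; [constructor|].
  destruct (decide_eq x a); [subst; constructor; auto; apply IH; lia | congruence].
Qed.

Definition mag_pow a (n : Z) : series A :=
  ziter (fun p => smul p (mag a)) (fun p => smul p (mag_inv a)) n one.

Lemma mag_pow_succ a n : mag_pow a (Z.succ n) = smul (mag_pow a n) (mag a).
Proof.
  unfold mag_pow. apply (ziter_succ (fun p => smul p (mag a)) (fun p => smul p (mag_inv a)));
    intros p; cbv beta; rewrite smul_assoc, ?mag_mag_inv, ?mag_inv_mag; apply smul_one_r.
Qed.

Lemma mag_pow_pred a n : mag_pow a (Z.pred n) = smul (mag_pow a n) (mag_inv a).
Proof.
  unfold mag_pow. apply (ziter_pred (fun p => smul p (mag a)) (fun p => smul p (mag_inv a)));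
    intros p; cbv beta; rewrite smul_assoc, ?mag_mag_inv, ?mag_inv_mag; apply smul_one_r.
Qed.

Lemma mag_pow_0 a : mag_pow a 0 = one.
Proof. reflexivity. Qed.

Lemma mag_pow_1 a : mag_pow a 1 = mag a.
Proof. apply smul_one_l. Qed.

Lemma mag_pow_add a m n : mag_pow a (m + n) = smul (mag_pow a m) (mag_pow a n).
Proof.
  induction n using Z.peano_ind.
  - rewrite Z.add_0_r, mag_pow_0, smul_one_r. reflexivity.
  - rewrite Z.add_succ_r, !mag_pow_succ, IHn, smul_assoc. reflexivity.
  - rewrite Z.add_pred_r, !mag_pow_pred, IHn, smul_assoc. reflexivity.
Qed.

Lemma mag_pow_opp_r a n : smul (mag_pow a n) (mag_pow a (- n)) = one.
Proof. rewrite <- mag_pow_add, Z.add_opp_diag_r. reflexivity. Qed.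

Lemma mag_pow_opp_l a n : smul (mag_pow a (- n)) (mag_pow a n) = one.
Proof. rewrite <- mag_pow_add, Z.add_opp_diag_l. reflexivity. Qed.

Lemma mag_pow_mag_comm a n : smul (mag_pow a n) (mag a) = smul (mag a) (mag_pow a n).
Proof. rewrite <- mag_pow_1, <- !mag_pow_add, Z.add_comm. reflexivity. Qed.

Lemma mag_pow_nil a n : mag_pow a n [] = 1.
Proof.
  induction n using Z.peano_ind; [reflexivity| |].
  - rewrite mag_pow_succ, smul_nil, IHn. reflexivity.
  - rewrite mag_pow_pred, smul_nil, IHn. reflexivity.
Qed.

Lemma mag_pow_single a n c : mag_pow a n [c] = if decide_eq c a then n else 0.
Proof.
  induction n using Z.peano_ind.
  - cbn. destruct (decide_eq c a); reflexivity.
  - rewrite mag_pow_succ, smul_single, IHn, mag_pow_nil. cbn.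
    destruct (decide_eq c a); lia.
  - rewrite mag_pow_pred, smul_single, IHn, mag_pow_nil. cbn.
    destruct (decide_eq c a); lia.
Qed.

Lemma mag_pow_support a n t : mag_pow a n t <> 0 -> Forall (eq a) t.
Proof.
  revert t; induction n using Z.peano_ind; intros t H.
  - destruct t; [constructor | cbn in H; congruence].
  - rewrite mag_pow_succ in H. apply smul_neq0_split in H as [u [v [-> [Hu Hv]]]].
    apply Forall_app; auto using mag_support.
  - rewrite mag_pow_pred in H. apply smul_neq0_split in H as [u [v [-> [Hu Hv]]]].
    apply Forall_app; auto using mag_inv_support.
Qed.

End MagnusGenerators.

Definition word (S : Type) := list (S * Z).

Section Words.
Context {A : Type}.
Implicit Types (a b c : A) (w u v : word A) (t : list A).

Fixpoint magnus w : series A :=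
  match w with [] => one | (b, n) :: w' => smul (mag_pow b n) (magnus w') end.

Definition word_inv w : word A := rev (map (fun bn => (fst bn, - snd bn)) w).

Definition conj_word v a : word A := word_inv v ++ [(a, 1)] ++ v.

Fixpoint exp_sum w c : Z :=
  match w with [] => 0 | (b, n) :: w' => (if decide_eq c b then n else 0) + exp_sum w' c end.

Lemma word_inv_cons b n w : word_inv ((b, n) :: w) = word_inv w ++ [(b, - n)].
Proof. reflexivity. Qed.

Lemma magnus_app u v : magnus (u ++ v) = smul (magnus u) (magnus v).
Proof.
  induction u as [|[b n] u IH]; cbn [app magnus].
  - rewrite smul_one_l. reflexivity.
  - rewrite IH, smul_assoc. reflexivity.
Qed.

Lemma magnus_single b n : magnus [(b, n)] = mag_pow b n.
Proof. apply smul_one_r. Qed.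

Lemma magnus_word_inv_r w : smul (magnus w) (magnus (word_inv w)) = one.
Proof.
  induction w as [|[b n] w IH]; cbn [magnus].
  - apply smul_one_l.
  - rewrite word_inv_cons, magnus_app, magnus_single, smul_assoc,
      <- (smul_assoc (magnus w)), IH, smul_one_l.
    apply mag_pow_opp_r.
Qed.

Lemma magnus_word_inv_l w : smul (magnus (word_inv w)) (magnus w) = one.
Proof.
  induction w as [|[b n] w IH]; cbn [magnus].
  - apply smul_one_l.
  - rewrite word_inv_cons, magnus_app, magnus_single, smul_assoc,
      <- (smul_assoc (mag_pow b (- n))), mag_pow_opp_l, smul_one_l.
    apply IH.
Qed.

Lemma magnus_conj_word v a :
  magnus (conj_word v a) = smul (smul (magnus (word_inv v)) (mag a)) (magnus v).
Proof.
  unfold conj_word. rewrite !magnus_app, magnus_single, mag_pow_1, smul_assoc. reflexivity.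
Qed.

Lemma magnus_nil w : magnus w [] = 1.
Proof.
  induction w as [|[b n] w IH]; cbn [magnus]; [reflexivity|].
  rewrite smul_nil, IH, mag_pow_nil. reflexivity.
Qed.

Lemma magnus_single_coef w c : magnus w [c] = exp_sum w c.
Proof.
  induction w as [|[b n] w IH]; cbn [magnus exp_sum]; [reflexivity|].
  rewrite smul_single, IH, mag_pow_nil, mag_pow_single, magnus_nil. ring.
Qed.

Lemma exp_sum_app u v c : exp_sum (u ++ v) c = exp_sum u c + exp_sum v c.
Proof. induction u as [|[b n] u IH]; cbn; [reflexivity|]. rewrite IH. ring. Qed.

Lemma exp_sum_word_inv w c : exp_sum (word_inv w) c = - exp_sum w c.
Proof.
  induction w as [|[b n] w IH]; [reflexivity|].
  rewrite word_inv_cons, exp_sum_app, IH. cbn. destruct (decide_eq c b); ring.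
Qed.

Lemma exp_sum_conj_word v a c : exp_sum (conj_word v a) c = if decide_eq c a then 1 else 0.
Proof.
  unfold conj_word. rewrite !exp_sum_app, exp_sum_word_inv. cbn.
  destruct (decide_eq c a); ring.
Qed.

End Words.

Section Skeleton.
Context {A : Type}.
Implicit Types (a b c x : A) (w u v : word A) (p q : series A) (t : list A).

Fixpoint blocks t : nat :=
  match t with
  | [] => 0
  | x :: t' => if decide_eq (head t') (Some x) then blocks t' else S (blocks t')
  end.

Fixpoint reduced w : Prop :=
  match w with
  | [] => True
  | (b, n) :: w' => n <> 0 /\ head (map fst w') <> Some b /\ reduced w'
  end.

Lemma blocks_cons_new x t : head t <> Some x -> blocks (x :: t) = S (blocks t).
Proof. cbn. destruct (decide_eq (head t) (Some x)); congruence. Qed.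

Lemma blocks_app_const b t1 t2 :
  Forall (eq b) t1 -> (blocks (t1 ++ t2) <= S (blocks t2))%nat.
Proof.
  induction 1 as [|x t1 <- Ht1 IH]; cbn -[blocks]; [lia|].
  destruct t1 as [|y t1]; cbn [app].
  - cbn. destruct (decide_eq (head t2) (Some b)); lia.
  - inversion Ht1; subst y. cbn. destruct (decide_eq (Some b) (Some b)); [exact IH|congruence].
Qed.

Lemma magnus_support_blocks w t : magnus w t <> 0 -> (blocks t <= length w)%nat.
Proof.
  revert t; induction w as [|[b n] w IH]; intros t H; cbn [magnus] in H.
  - destruct t; cbn in *; [lia|congruence].
  - apply smul_neq0_split in H as [t1 [t2 [-> [H1 H2]]]].
    pose proof (blocks_app_const b t1 t2 (mag_pow_support b n t1 H1)).
    specialize (IH t2 H2). cbn. lia.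
Qed.

Lemma blocks_skeleton w : reduced w -> blocks (map fst w) = length w.
Proof.
  induction w as [|[b n] w IH]; intros H; [reflexivity|].
  destruct H as [_ [Hhead Hw]]. cbn [map fst length].
  rewrite blocks_cons_new, IH; auto.
Qed.

Lemma smul_mag_pow_cons b n q t :
  head t <> Some b -> smul (mag_pow b n) q (b :: t) = q (b :: t) + n * q t.
Proof.
  intros Ht. rewrite smul_cons, mag_pow_nil.
  destruct t as [|c t].
  - rewrite smul_nil. unfold lquot. rewrite mag_pow_single.
    destruct (decide_eq b b); [ring|congruence].
  - rewrite smul_cons. unfold lquot at 1. rewrite mag_pow_single.
    destruct (decide_eq b b) as [_|]; [|congruence].
    rewrite smul_vanish_l; [ring|].
    intros u. unfold lquot. destruct (Z.eq_dec (mag_pow b n (b :: c :: u)) 0) as [E|E]; auto.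
    apply mag_pow_support in E. inversion E as [|? ? _ Hc]. inversion Hc. cbn in Ht. congruence.
Qed.

Lemma magnus_skeleton_cons b n w :
  reduced ((b, n) :: w) ->
  magnus ((b, n) :: w) (b :: map fst w) = n * magnus w (map fst w).
Proof.
  intros [_ [Hhead Hw]]. cbn [magnus]. rewrite smul_mag_pow_cons by exact Hhead.
  enough (magnus w (b :: map fst w) = 0) as -> by ring.
  destruct (Z.eq_dec (magnus w (b :: map fst w)) 0) as [E|E]; auto.
  apply magnus_support_blocks in E.
  rewrite blocks_cons_new, blocks_skeleton in E by assumption. lia.
Qed.

Lemma magnus_skeleton_neq0 w : reduced w -> magnus w (map fst w) <> 0.
Proof.
  induction w as [|[b n] w IH]; intros H; [discriminate|].
  cbn [map fst]. rewrite magnus_skeleton_cons by exact H.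
  destruct H as [Hn [_ Hw]]. apply Z.neq_mul_0. auto.
Qed.

End Skeleton.

Section Centralizer.
Context {A : Type}.
Implicit Types (a b c : A) (w u v : word A) (p q : series A) (t : list A).

Inductive wstep : word A -> word A -> Prop :=
| wstep_zero u1 b u2 : wstep (u1 ++ (b, 0) :: u2) (u1 ++ u2)
| wstep_merge u1 b m n u2 : wstep (u1 ++ (b, m) :: (b, n) :: u2) (u1 ++ (b, m + n) :: u2).

(* Equality in the free group on [A], for words of syllables [b^n]. *)
Definition wequiv : word A -> word A -> Prop := clos_refl_sym_trans (word A) wstep.

Lemma wequiv_invariant {T : Type} (f : word A -> T) :
  (forall w w', wstep w w' -> f w = f w') -> forall w w', wequiv w w' -> f w = f w'.
Proof. intros Hf w w' H. induction H; congruence || auto. Qed.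

Lemma wstep_length w w' : wstep w w' -> (length w' < length w)%nat.
Proof. destruct 1; rewrite !length_app; cbn; lia. Qed.

Lemma wstep_app_r w w' x : wstep w w' -> wstep (w ++ x) (w' ++ x).
Proof.
  destruct 1; rewrite <- !app_assoc; cbn [app]; constructor.
Qed.

Lemma wequiv_app_r w w' x : wequiv w w' -> wequiv (w ++ x) (w' ++ x).
Proof.
  induction 1.
  - apply rst_step, wstep_app_r. assumption.
  - apply rst_refl.
  - apply rst_sym. assumption.
  - eapply rst_trans; eassumption.
Qed.

Lemma magnus_wstep w w' : wstep w w' -> magnus w = magnus w'.
Proof.
  destruct 1; rewrite !magnus_app; cbn [magnus].
  - rewrite mag_pow_0, smul_one_l. reflexivity.
  - rewrite mag_pow_add, smul_assoc. reflexivity.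
Qed.

Lemma magnus_wequiv w w' : wequiv w w' -> magnus w = magnus w'.
Proof. apply wequiv_invariant, magnus_wstep. Qed.

Lemma exp_sum_wequiv w w' c : wequiv w w' -> exp_sum w c = exp_sum w' c.
Proof. intros H. rewrite <- !magnus_single_coef. apply magnus_wequiv in H. congruence. Qed.

Lemma reduced_or_wstep w : reduced w \/ exists w', wstep w w'.
Proof.
  induction w as [|[b n] w IH]; [left; exact I|].
  destruct IH as [IH|[w' Hw']].
  - destruct (Z.eq_dec n 0) as [->|Hn].
    + right. exists w. apply (wstep_zero []).
    + destruct w as [|[b' n'] w].
      * left. cbn. repeat split; congruence.
      * destruct (decide_eq b' b) as [->|Hb].
        -- right. exists ((b, n + n') :: w). apply (wstep_merge []).
        -- left. cbn. split; [|split]; congruence || assumption.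
  - right. exists ((b, n) :: w').
    destruct Hw'; [apply (wstep_zero ((b, n) :: u1)) | apply (wstep_merge ((b, n) :: u1))].
Qed.

Definition commutes p q : Prop := smul p q = smul q p.

Lemma commutes_strip_mag_pow w a n :
  commutes (magnus (w ++ [(a, n)])) (mag a) -> commutes (magnus w) (mag a).
Proof.
  unfold commutes. rewrite magnus_app, magnus_single. intros H.
  transitivity (smul (smul (smul (magnus w) (mag_pow a n)) (mag a)) (mag_pow a (- n))).
  - rewrite !smul_assoc, <- mag_pow_mag_comm, <- (smul_assoc (mag_pow a n)),
      mag_pow_opp_r, smul_one_l.
    reflexivity.
  - rewrite H, !smul_assoc, mag_pow_opp_r, smul_one_r. reflexivity.
Qed.

Lemma smul_mag_r_snoc a p t c :
  smul p (mag a) (t ++ [c]) = p (t ++ [c]) + (if decide_eq c a then p t else 0).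
Proof.
  revert p; induction t as [|y t IH]; intros p.
  - rewrite app_nil_l, smul_single. cbn. destruct (decide_eq c a); ring.
  - rewrite <- app_comm_cons, smul_cons, IH.
    replace (mag a (y :: t ++ [c])) with 0 by (destruct t; reflexivity).
    unfold lquot. ring.
Qed.

(* The two sides differ at [a] followed by the skeleton of [w]. *)
Lemma reduced_not_commutes w c n a :
  reduced (w ++ [(c, n)]) -> c <> a -> ~ commutes (magnus (w ++ [(c, n)])) (mag a).
Proof.
  intros Hr Hc H. apply (magnus_skeleton_neq0 _ Hr).
  rewrite map_app. cbn [map fst].
  pose proof (f_equal (fun f => f (a :: map fst w ++ [c])) H) as E. cbn beta in E.
  rewrite smul_mag_l_cons, app_comm_cons, smul_mag_r_snoc in E.
  destruct (decide_eq a a), (decide_eq c a); congruence || lia.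
Qed.

Theorem magnus_centralizer a w :
  commutes (magnus w) (mag a) -> exists k, wequiv w [(a, k)].
Proof.
  induction w as [w IH] using (well_founded_induction (well_founded_ltof _ (@length _))).
  unfold ltof in IH.
  intros Hw. destruct w as [|[c n] w _] using rev_ind.
  { exists 0. apply rst_sym, rst_step, (wstep_zero [] a []). }
  destruct (decide_eq c a) as [->|Hc].
  - destruct (IH w) as [k Hk].
    + rewrite length_app. cbn. lia.
    + exact (commutes_strip_mag_pow w a n Hw).
    + exists (k + n). eapply rst_trans; [apply (wequiv_app_r _ _ _ Hk)|].
      apply rst_step, (wstep_merge []).
  - destruct (reduced_or_wstep (w ++ [(c, n)])) as [Hr|[w' Hstep]].
    + exfalso. exact (reduced_not_commutes w c n a Hr Hc Hw).
    + destruct (IH w') as [k Hk].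
      * apply wstep_length. exact Hstep.
      * unfold commutes. rewrite <- (magnus_wstep _ _ Hstep). exact Hw.
      * exists k. eapply rst_trans; [apply rst_step, Hstep | exact Hk].
Qed.

End Centralizer.

Section LeadingOrder.
Context {A : Type} (R : list A -> list A -> Prop).
Hypotheses (R_total : forall x y, R x y \/ R y x)
  (R_antisym : forall x y, R x y -> R y x -> x = y)
  (R_trans : forall x y z, R x y -> R y z -> R x z)
  (R_min : forall P : list A -> Prop, (exists x, P x) -> exists m, P m /\ forall x, P x -> R m x).
Implicit Types (d p q r s : series A).

Definition leading_pos d : Prop :=
  exists t, d t > 0 /\ (forall u, (length u < length t)%nat -> d u = 0) /\
    (forall u, length u = length t -> d u <> 0 -> R t u).

Definition series_lt p q : Prop := leading_pos (ssub q p).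

Lemma leading_pos_add d1 d2 :
  leading_pos d1 -> leading_pos d2 -> leading_pos (fun t => d1 t + d2 t).
Proof.
  intros [t1 [P1 [L1 M1]]] [t2 [P2 [L2 M2]]].
  destruct (Nat.lt_trichotomy (length t1) (length t2)) as [H|[H|H]].
  - exists t1. rewrite (L2 t1 H). repeat split; [lia| |].
    + intros u Hu. rewrite L1, L2 by lia. reflexivity.
    + intros u Hu Hnz. apply M1; auto. rewrite (L2 u) in Hnz by lia. lia.
  - destruct (R_total t1 t2) as [R12|R21].
    + exists t1. repeat split.
      * destruct (Z.eq_dec (d2 t1) 0) as [E|E]; [lia|].
        assert (t2 = t1) by (apply R_antisym; auto). subst. lia.
      * intros u Hu. rewrite L1, L2 by lia. reflexivity.
      * intros u Hu Hnz. destruct (Z.eq_dec (d1 u) 0) as [E|E]; auto.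
        apply (R_trans _ t2); auto. apply M2; lia.
    + exists t2. repeat split.
      * destruct (Z.eq_dec (d1 t2) 0) as [E|E]; [lia|].
        assert (t2 = t1) by (apply R_antisym; auto). subst. lia.
      * intros u Hu. rewrite L1, L2 by lia. reflexivity.
      * intros u Hu Hnz. destruct (Z.eq_dec (d2 u) 0) as [E|E]; auto.
        apply (R_trans _ t1); auto. apply M1; lia.
  - exists t2. rewrite (L1 t2 H). repeat split; [lia| |].
    + intros u Hu. rewrite L1, L2 by lia. reflexivity.
    + intros u Hu Hnz. apply M2; auto. rewrite (L1 u) in Hnz by lia. lia.
Qed.

Lemma leading_pos_total d :
  (exists t, d t <> 0) -> leading_pos d \/ leading_pos (fun t => - d t).
Proof.
  intros [t Ht].
  destruct (dec_inh_nat_subset_has_unique_least_element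
              (fun n => exists t, length t = n /\ d t <> 0) (fun n => classic _)
              (ex_intro _ (length t) (ex_intro _ t (conj eq_refl Ht))))
    as [n [[[t0 [Ht0 Hdt0]] Hleast] _]].
  destruct (R_min (fun t => length t = n /\ d t <> 0) (ex_intro _ t0 (conj Ht0 Hdt0)))
    as [m [[Hm Hdm] Hmin]].
  assert (Low : forall u, (length u < length m)%nat -> d u = 0).
  { intros u Hu. destruct (Z.eq_dec (d u) 0) as [|E]; auto.
    assert (n <= length u)%nat by eauto. lia. }
  destruct (Z_lt_le_dec 0 (d m)); [left|right]; exists m; repeat split.
  - lia.
  - exact Low.
  - intros u Hu Hnz. apply Hmin. split; [lia | exact Hnz].
  - lia.
  - intros u Hu. rewrite Low; auto.
  - intros u Hu Hnz. apply Hmin. split; lia.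
Qed.

Lemma leading_pos_smul_r d r : r [] = 1 -> leading_pos d -> leading_pos (smul d r).
Proof.
  intros Hr [t [P [L M]]].
  assert (E : forall u, (length u <= length t)%nat -> smul d r u = d u).
  { intros u Hu. rewrite smul_low_l, Hr; [ring|]. intros u' Hu'. apply L. lia. }
  exists t. rewrite E by lia. repeat split; [lia| |].
  - intros u Hu. rewrite E by lia. auto.
  - intros u Hu Hnz. rewrite E in Hnz by lia. auto.
Qed.

Lemma leading_pos_smul_l d r : r [] = 1 -> leading_pos d -> leading_pos (smul r d).
Proof.
  intros Hr [t [P [L M]]].
  assert (E : forall u, (length u <= length t)%nat -> smul r d u = d u).
  { intros u Hu. rewrite smul_low_r, Hr; [ring|]. intros u' Hu'. apply L. lia. }
  exists t. rewrite E by lia. repeat split; [lia| |].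
  - intros u Hu. rewrite E by lia. auto.
  - intros u Hu Hnz. rewrite E in Hnz by lia. auto.
Qed.

Lemma series_lt_strict_linear : strict_linear_order (series A) series_lt.
Proof.
  repeat split.
  - intros p [t [Ht _]]. unfold ssub in Ht. lia.
  - intros p q r Hpq Hqr. unfold series_lt.
    replace (ssub r p) with (fun t => ssub q p t + ssub r q t)
      by (apply functional_extensionality; intros t; unfold ssub; ring).
    apply leading_pos_add; assumption.
  - intros p q. destruct (classic (p = q)) as [|Hpq]; [right; left; assumption|].
    assert (Hd : exists t, ssub q p t <> 0).
    { apply NNPP. intros H. apply Hpq. apply functional_extensionality. intros t.
      destruct (Z.eq_dec (ssub q p t) 0) as [E|E]; [unfold ssub in E; lia | exfalso; eauto]. }
    destruct (leading_pos_total _ Hd) as [|H]; [left; assumption | right; right].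
    unfold series_lt. replace (ssub p q) with (fun t => - ssub q p t)
      by (apply functional_extensionality; intros t; unfold ssub; ring).
    exact H.
Qed.

Lemma series_lt_conj p q r s :
  r [] = 1 -> s [] = 1 -> series_lt p q -> series_lt (smul (smul r p) s) (smul (smul r q) s).
Proof.
  intros Hr Hs H. unfold series_lt. rewrite <- smul_sub_l, <- smul_sub_r.
  apply leading_pos_smul_r, leading_pos_smul_l; assumption.
Qed.

End LeadingOrder.

Section ConjugationQuandle.
Context {A : Type}.
Implicit Types (p q r : series A).

Definition unit1 p : Prop := p [] = 1 /\ exists q, smul p q = one /\ smul q p = one.

Definition unit1_series := {p : series A | unit1 p}.
Implicit Types (x y z : unit1_series).

Definition uinv x : series A :=
  proj1_sig (constructive_indefinite_description _ (proj2 (proj2_sig x))).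

Lemma uinv_spec x : smul (proj1_sig x) (uinv x) = one /\ smul (uinv x) (proj1_sig x) = one.
Proof. unfold uinv. destruct (constructive_indefinite_description _ _) as [q Hq]. exact Hq. Qed.

Lemma uinv_r x : smul (proj1_sig x) (uinv x) = one.
Proof. apply uinv_spec. Qed.

Lemma uinv_l x : smul (uinv x) (proj1_sig x) = one.
Proof. apply uinv_spec. Qed.

Lemma unit1_nil x : proj1_sig x [] = 1.
Proof. apply (proj2_sig x). Qed.

Lemma uinv_nil x : uinv x [] = 1.
Proof.
  pose proof (f_equal (fun f => f []) (uinv_r x)) as H. cbn beta in H.
  rewrite smul_nil, unit1_nil, Z.mul_1_l in H. exact H.
Qed.

Lemma smul_uinv_l x r : smul (uinv x) (smul (proj1_sig x) r) = r.
Proof. rewrite <- smul_assoc, uinv_l, smul_one_l. reflexivity. Qed.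

Lemma smul_uinv_r x r : smul (proj1_sig x) (smul (uinv x) r) = r.
Proof. rewrite <- smul_assoc, uinv_r, smul_one_l. reflexivity. Qed.

Lemma uinv_unique x q : smul (proj1_sig x) q = one -> uinv x = q.
Proof.
  intros H. rewrite <- (smul_one_r (uinv x)), <- H, <- smul_assoc, uinv_l, smul_one_l.
  reflexivity.
Qed.

Lemma unit1_one : unit1 one.
Proof. split; [reflexivity|]. exists one. split; apply smul_one_l. Qed.

Lemma unit1_smul p q : unit1 p -> unit1 q -> unit1 (smul p q).
Proof.
  intros [Hp [p' [Hp1 Hp2]]] [Hq [q' [Hq1 Hq2]]]. split.
  - rewrite smul_nil, Hp, Hq. reflexivity.
  - exists (smul q' p'). split.
    + rewrite smul_assoc, <- (smul_assoc q), Hq1, smul_one_l. exact Hp1.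
    + rewrite smul_assoc, <- (smul_assoc p'), Hp2, smul_one_l. exact Hq2.
Qed.

Lemma unit1_uinv x : unit1 (uinv x).
Proof. split; [apply uinv_nil|]. exists (proj1_sig x). split; [apply uinv_l|apply uinv_r]. Qed.

Lemma unit1_series_eq x y : proj1_sig x = proj1_sig y -> x = y.
Proof. destruct x, y; cbn; intros ->. f_equal. apply proof_irrelevance. Qed.

Definition conj_op x y : unit1_series :=
  exist _ (smul (smul (uinv y) (proj1_sig x)) (proj1_sig y))
    (unit1_smul _ _ (unit1_smul _ _ (unit1_uinv y) (proj2_sig x)) (proj2_sig y)).

Lemma uinv_conj_op y z : uinv (conj_op y z) = smul (smul (uinv z) (uinv y)) (proj1_sig z).
Proof.
  apply uinv_unique. cbn. rewrite !smul_assoc, !smul_uinv_r. apply uinv_l.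
Qed.

Lemma conj_op_idem x : conj_op x x = x.
Proof. apply unit1_series_eq. cbn. rewrite uinv_l, smul_one_l. reflexivity. Qed.

Lemma conj_op_rdiv x y : exists! z, x = conj_op z y.
Proof.
  exists (exist _ (smul (smul (proj1_sig y) (proj1_sig x)) (uinv y))
       (unit1_smul _ _ (unit1_smul _ _ (proj2_sig y) (proj2_sig x)) (unit1_uinv y))).
  split.
  - apply unit1_series_eq. cbn. rewrite !smul_assoc, smul_uinv_l, uinv_l, smul_one_r.
    reflexivity.
  - intros z ->. apply unit1_series_eq. cbn.
    rewrite !smul_assoc, smul_uinv_r, uinv_r, smul_one_r. reflexivity.
Qed.

Lemma conj_op_rdist x y z : conj_op (conj_op x y) z = conj_op (conj_op x z) (conj_op y z).
Proof.
  apply unit1_series_eq. cbn [conj_op proj1_sig]. rewrite uinv_conj_op.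
  rewrite !smul_assoc, !smul_uinv_r. reflexivity.
Qed.

End ConjugationQuandle.

Arguments unit1_series A : clear implicits.

Definition conj_quandle (A : Type) : quandle :=
  Quandle (unit1_series A) conj_op (inhabits (exist _ one unit1_one))
    conj_op_idem conj_op_rdiv conj_op_rdist.

Lemma strict_linear_order_inj {X Y : Type} (f : X -> Y) (lt : Y -> Y -> Prop) :
  (forall x y, f x = f y -> x = y) -> strict_linear_order Y lt ->
  strict_linear_order X (fun x y => lt (f x) (f y)).
Proof.
  intros Hf [Hirr [Htr Htot]]. repeat split.
  - intros x. apply Hirr.
  - intros x y z. apply Htr.
  - intros x y. destruct (Htot (f x) (f y)) as [H|[H|H]]; auto.
Qed.

Lemma right_orderable_inj_hom (Q Q' : quandle) (f : Q -> Q') :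
  quandle_hom Q Q' f -> (forall x y, f x = f y -> x = y) ->
  right_orderable Q' -> right_orderable Q.
Proof.
  intros Hhom Hinj [lt [Hlin Hinv]].
  exists (fun x y => lt (f x) (f y)). split.
  - apply strict_linear_order_inj; assumption.
  - intros x y z H. rewrite !Hhom. apply Hinv, H.
Qed.

Lemma conj_quandle_right_orderable (A : Type) : right_orderable (conj_quandle A).
Proof.
  destruct (WellOrder.well_order_exists (list A)) as [R [Rtot [Ranti [Rtr Rmin]]]].
  exists (fun x y : unit1_series A => series_lt R (proj1_sig x) (proj1_sig y)). split.
  - apply strict_linear_order_inj; [apply unit1_series_eq|].
    apply series_lt_strict_linear; assumption.
  - intros x y z H. apply series_lt_conj; [apply uinv_nil | apply unit1_nil | exact H].
Qed.

Section RightTranslations.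
Context {Q : quandle}.
Implicit Types (x y z : Q) (f g : Q -> Q).

Definition rtrans y x : Q := qop Q x y.

Definition rtrans_inv y x : Q :=
  proj1_sig (constructive_indefinite_description _
    (proj1 (proj2 (unique_existence _) (q_rdiv Q x y)))).

Lemma rtrans_rtrans_inv y x : rtrans y (rtrans_inv y x) = x.
Proof.
  unfold rtrans, rtrans_inv. destruct (constructive_indefinite_description _ _) as [z Hz].
  symmetry. exact Hz.
Qed.

Lemma rtrans_inv_rtrans y x : rtrans_inv y (rtrans y x) = x.
Proof.
  destruct (q_rdiv Q (rtrans y x) y) as [z [_ Hz]].
  transitivity z.
  - symmetry. apply Hz. symmetry. apply rtrans_rtrans_inv.
  - apply Hz. reflexivity.
Qed.

Definition is_auto f g : Prop :=
  (forall x, f (g x) = x) /\ (forall x, g (f x) = x) /\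
  (forall x y, f (qop Q x y) = qop Q (f x) (f y)).

Lemma is_auto_sym f g : is_auto f g -> is_auto g f.
Proof.
  intros [fg [gf hom]]. repeat split; auto.
  intros x y. rewrite <- (gf (qop Q (g x) (g y))), hom, !fg. reflexivity.
Qed.

Lemma rtrans_auto y : is_auto (rtrans y) (rtrans_inv y).
Proof.
  repeat split; [apply rtrans_rtrans_inv | apply rtrans_inv_rtrans |].
  intros a b. apply q_rdist.
Qed.

Definition rtrans_pow y (n : Z) : Q -> Q := ziter (rtrans y) (rtrans_inv y) n.

Lemma rtrans_pow_succ y n x : rtrans_pow y (Z.succ n) x = rtrans y (rtrans_pow y n x).
Proof. apply ziter_succ, rtrans_rtrans_inv. Qed.

Lemma rtrans_pow_pred y n x : rtrans_pow y (Z.pred n) x = rtrans_inv y (rtrans_pow y n x).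
Proof. apply ziter_pred; [apply rtrans_rtrans_inv | apply rtrans_inv_rtrans]. Qed.

Lemma rtrans_pow_add y m n x :
  rtrans_pow y (m + n) x = rtrans_pow y m (rtrans_pow y n x).
Proof. apply ziter_add; [apply rtrans_rtrans_inv | apply rtrans_inv_rtrans]. Qed.

Lemma rtrans_pow_auto y n : is_auto (rtrans_pow y n) (rtrans_pow y (- n)).
Proof.
  repeat split.
  - intros x. rewrite <- rtrans_pow_add, Z.add_opp_diag_r. reflexivity.
  - intros x. rewrite <- rtrans_pow_add, Z.add_opp_diag_l. reflexivity.
  - induction n using Z.peano_ind; intros a b.
    + reflexivity.
    + rewrite !rtrans_pow_succ, IHn. apply rtrans_auto.
    + rewrite !rtrans_pow_pred, IHn. apply (is_auto_sym _ _ (rtrans_auto y)).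
Qed.

Lemma rtrans_pow_self y n : rtrans_pow y n y = y.
Proof.
  induction n using Z.peano_ind.
  - reflexivity.
  - rewrite rtrans_pow_succ, IHn. apply q_idem.
  - rewrite rtrans_pow_pred, IHn. rewrite <- (q_idem Q y) at 2. apply rtrans_inv_rtrans.
Qed.

Lemma auto_rtrans f g y z : is_auto f g -> rtrans (f y) z = f (rtrans y (g z)).
Proof. intros [fg [_ hom]]. unfold rtrans. rewrite hom, fg. reflexivity. Qed.

Lemma auto_rtrans_inv f g y z : is_auto f g -> rtrans_inv (f y) z = f (rtrans_inv y (g z)).
Proof.
  intros [fg [_ hom]].
  rewrite <- (rtrans_inv_rtrans (f y) (f (rtrans_inv y (g z)))). f_equal.
  unfold rtrans at 1. rewrite <- hom.
  change (qop Q (rtrans_inv y (g z)) y) with (rtrans y (rtrans_inv y (g z))).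
  rewrite rtrans_rtrans_inv, fg. reflexivity.
Qed.

End RightTranslations.

Section WordAction.
Context {A : Type} {Q : quandle} (i : A -> Q).
Implicit Types (x y z : Q) (w u v : word A).

Fixpoint word_act x w : Q :=
  match w with [] => x | (b, n) :: w' => word_act (rtrans_pow (i b) n x) w' end.

Lemma word_act_app x u v : word_act x (u ++ v) = word_act (word_act x u) v.
Proof. revert x; induction u as [|[b n] u IH]; intros x; cbn; auto. Qed.

Lemma word_act_word_inv_r x w : word_act (word_act x w) (word_inv w) = x.
Proof.
  revert x; induction w as [|[b n] w IH]; intros x; [reflexivity|].
  rewrite word_inv_cons, word_act_app. cbn [word_act]. rewrite IH. cbn.
  apply (rtrans_pow_auto (i b) n).
Qed.

Lemma word_act_word_inv_l x w : word_act (word_act x (word_inv w)) w = x.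
Proof.
  revert x; induction w as [|[b n] w IH]; intros x; [reflexivity|].
  rewrite word_inv_cons, word_act_app. cbn.
  destruct (rtrans_pow_auto (i b) n) as [fg _]. rewrite fg. apply IH.
Qed.

Lemma word_act_rtrans w : forall y z,
  rtrans (word_act y w) z = word_act (rtrans y (word_act z (word_inv w))) w.
Proof.
  induction w as [|[c n] w IH]; intros y z; [reflexivity|].
  cbn [word_act]. rewrite IH, (auto_rtrans _ _ _ _ (rtrans_pow_auto (i c) n)).
  rewrite word_inv_cons, word_act_app. reflexivity.
Qed.

Lemma word_act_rtrans_inv w : forall y z,
  rtrans_inv (word_act y w) z = word_act (rtrans_inv y (word_act z (word_inv w))) w.
Proof.
  induction w as [|[c n] w IH]; intros y z; [reflexivity|].
  cbn [word_act]. rewrite IH, (auto_rtrans_inv _ _ _ _ (rtrans_pow_auto (i c) n)).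
  rewrite word_inv_cons, word_act_app. reflexivity.
Qed.

Lemma word_act_wequiv x w w' : wequiv w w' -> word_act x w = word_act x w'.
Proof.
  apply (wequiv_invariant (fun w => word_act x w)). clear w w'.
  destruct 1; rewrite !word_act_app; cbn [word_act]; [reflexivity|].
  rewrite Z.add_comm, rtrans_pow_add. reflexivity.
Qed.

Definition generated x : Prop := exists a v, x = word_act (i a) v.

Lemma generated_gen a : generated (i a).
Proof. exists a, []. reflexivity. Qed.

Lemma generated_op x y : generated x -> generated y -> generated (qop Q x y).
Proof.
  intros [a [v ->]] [b [w ->]]. exists a, (v ++ word_inv w ++ [(b, 1)] ++ w).
  change (qop Q _ _) with (rtrans (word_act (i b) w) (word_act (i a) v)).
  rewrite word_act_rtrans, !word_act_app. reflexivity.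
Qed.

Lemma generated_rtrans_inv x y : generated x -> generated y -> generated (rtrans_inv y x).
Proof.
  intros [a [v ->]] [b [w ->]]. exists a, (v ++ word_inv w ++ [(b, -1)] ++ w).
  rewrite word_act_rtrans_inv, !word_act_app. reflexivity.
Qed.

End WordAction.

Section GeneratedSubquandle.
Context {A : Type} {Q : quandle} (i : A -> Q) (a0 : A).

Definition gen_sub := {x : Q | generated i x}.

Definition gen_sub_of (a : A) : gen_sub := exist _ (i a) (generated_gen i a).

Definition gen_sub_op (x y : gen_sub) : gen_sub :=
  exist _ (qop Q (proj1_sig x) (proj1_sig y)) (generated_op i _ _ (proj2_sig x) (proj2_sig y)).

Lemma gen_sub_eq (x y : gen_sub) : proj1_sig x = proj1_sig y -> x = y.
Proof. destruct x, y; cbn; intros ->. f_equal. apply proof_irrelevance. Qed.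

Lemma gen_sub_idem x : gen_sub_op x x = x.
Proof. apply gen_sub_eq, q_idem. Qed.

Lemma gen_sub_rdiv x y : exists! z, x = gen_sub_op z y.
Proof.
  exists (exist _ (rtrans_inv (proj1_sig y) (proj1_sig x))
       (generated_rtrans_inv i _ _ (proj2_sig x) (proj2_sig y))).
  split.
  - apply gen_sub_eq. symmetry. apply (rtrans_rtrans_inv (proj1_sig y)).
  - intros z ->. apply gen_sub_eq. apply (rtrans_inv_rtrans (proj1_sig y)).
Qed.

Lemma gen_sub_rdist x y z :
  gen_sub_op (gen_sub_op x y) z = gen_sub_op (gen_sub_op x z) (gen_sub_op y z).
Proof. apply gen_sub_eq, q_rdist. Qed.

Definition gen_subquandle : quandle :=
  Quandle gen_sub gen_sub_op (inhabits (gen_sub_of a0)) gen_sub_idem gen_sub_rdiv gen_sub_rdist.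

End GeneratedSubquandle.

Definition trivial_bool_quandle : quandle :=
  Quandle bool (fun x _ => x) (inhabits true) (fun _ => eq_refl)
    (fun x _ => ex_intro _ x (conj eq_refl (fun _ H => H))) (fun _ _ _ => eq_refl).

(* Two distinct homomorphisms to [bool] would agree on the empty set of generators. *)
Lemma free_quandle_inhabited (S : Type) (Q : quandle) (i : S -> Q) :
  is_free_quandle S Q i -> inhabited S.
Proof.
  intros Hfree. apply NNPP. intros HS. destruct (q_nonempty Q) as [x0].
  destruct (Hfree trivial_bool_quandle (fun _ => true)) as [g [_ [_ Huniq]]].
  assert (Hconst : forall b : bool, b = g x0).
  { intros b. apply (Huniq (fun _ => b)); [intros x y; reflexivity|].
    intros s. exfalso. exact (HS (inhabits s)). }
  pose proof (Hconst true). pose proof (Hconst false). congruence.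
Qed.

Lemma free_quandle_generated (S : Type) (Q : quandle) (i : S -> Q) :
  is_free_quandle S Q i -> forall x, generated i x.
Proof.
  intros Hfree. destruct (free_quandle_inhabited S Q i Hfree) as [s0].
  destruct (Hfree (gen_subquandle i s0) (gen_sub_of i)) as [k [Hk [Hki _]]].
  destruct (Hfree Q i) as [g [_ [_ Huniq]]].
  assert (Hval : forall x, proj1_sig (k x) = g x).
  { apply Huniq; [intros x y | intros s]; cbn beta; [rewrite Hk | rewrite Hki]; reflexivity. }
  assert (Hid : forall x, x = g x)
    by (apply (Huniq (fun x => x)); [intros x y | intros s]; reflexivity).
  intros x. rewrite (Hid x), <- Hval. apply (proj2_sig (k x)).
Qed.

Section CentralizerOfConjugates.
Context {A : Type}.
Implicit Types (a b c : A) (w u v z : word A).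

Lemma magnus_conj_word_l v a :
  smul (magnus v) (magnus (conj_word v a)) = smul (mag a) (magnus v).
Proof.
  rewrite magnus_conj_word, <- !smul_assoc, magnus_word_inv_r, smul_one_l. reflexivity.
Qed.

Lemma magnus_conj_word_r v a :
  smul (magnus (conj_word v a)) (magnus (word_inv v)) = smul (magnus (word_inv v)) (mag a).
Proof. rewrite magnus_conj_word, smul_assoc, magnus_word_inv_r, smul_one_r. reflexivity. Qed.

Lemma centralizer_conj_word v a z :
  commutes (magnus z) (magnus (conj_word v a)) ->
  exists k, wequiv (v ++ z ++ word_inv v) [(a, k)].
Proof.
  intros H. apply magnus_centralizer. unfold commutes. rewrite !magnus_app.
  rewrite !smul_assoc, <- magnus_conj_word_r, <- (smul_assoc (magnus z)), H,
    smul_assoc, <- (smul_assoc (magnus v)), magnus_conj_word_l, !smul_assoc.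
  reflexivity.
Qed.

Lemma magnus_trivial_of_conj v z a :
  wequiv (v ++ z ++ word_inv v) [(a, 0)] -> magnus z = one.
Proof.
  intros H. apply magnus_wequiv in H.
  rewrite !magnus_app, magnus_single, mag_pow_0 in H.
  transitivity (smul (magnus (word_inv v))
    (smul (smul (magnus v) (smul (magnus z) (magnus (word_inv v)))) (magnus v))).
  - rewrite !smul_assoc, magnus_word_inv_l, smul_one_r, <- smul_assoc, magnus_word_inv_l,
      smul_one_l.
    reflexivity.
  - rewrite H, smul_one_l. apply magnus_word_inv_l.
Qed.

Lemma indicator_diff_multiple b1 b2 a k :
  (forall c, (if decide_eq c b1 then 1 else 0) - (if decide_eq c b2 then 1 else 0)
             = if decide_eq c a then k else 0) -> k = 0.
Proof.
  intros H. pose proof (H a) as Ha. pose proof (H b1) as H1. pose proof (H b2) as H2.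
  destruct (decide_eq a a); [|congruence].
  destruct (decide_eq b1 b1), (decide_eq b2 b2); try congruence.
  destruct (decide_eq a b1), (decide_eq a b2), (decide_eq b1 b2), (decide_eq b2 b1),
    (decide_eq b1 a), (decide_eq b2 a); subst; congruence || lia.
Qed.

End CentralizerOfConjugates.

Lemma unit1_mag {A : Type} (a : A) : unit1 (mag a).
Proof.
  split; [reflexivity|]. exists (mag_inv a). split; [apply mag_mag_inv | apply mag_inv_mag].
Qed.

Definition mag_unit {A : Type} (a : A) : conj_quandle A := exist _ (mag a) (unit1_mag a).

Section MagnusRepresentation.
Context {A : Type} {Q : quandle} (i : A -> Q) (g : Q -> conj_quandle A).
Hypotheses (g_hom : quandle_hom Q (conj_quandle A) g)
  (g_gen : forall a, g (i a) = mag_unit a)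
  (Q_gen : forall x, generated i x).
Implicit Types (a b : A) (x y : Q) (v w : word A).

Local Notation rep x := (proj1_sig (g x)).

Lemma rep_gen a : rep (i a) = mag a.
Proof. rewrite g_gen. reflexivity. Qed.

Lemma rep_op x y : smul (rep y) (rep (qop Q x y)) = smul (rep x) (rep y).
Proof. rewrite g_hom. cbn. rewrite !smul_assoc, smul_uinv_r. reflexivity. Qed.

Lemma rep_rtrans b x : smul (mag b) (rep (rtrans (i b) x)) = smul (rep x) (mag b).
Proof. rewrite <- rep_gen. apply rep_op. Qed.

Lemma rep_rtrans_inv b x :
  smul (mag_inv b) (rep (rtrans_inv (i b) x)) = smul (rep x) (mag_inv b).
Proof.
  rewrite <- (rtrans_rtrans_inv (i b) x) at 2. set (z := rtrans_inv (i b) x).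
  transitivity (smul (mag_inv b) (smul (smul (rep z) (mag b)) (mag_inv b))).
  - rewrite smul_assoc, mag_mag_inv, smul_one_r. reflexivity.
  - rewrite <- rep_rtrans, <- !smul_assoc, mag_inv_mag, smul_one_l. reflexivity.
Qed.

Lemma rep_rtrans_pow b n x :
  smul (mag_pow b n) (rep (rtrans_pow (i b) n x)) = smul (rep x) (mag_pow b n).
Proof.
  induction n using Z.peano_ind.
  - rewrite mag_pow_0, smul_one_l, smul_one_r. reflexivity.
  - rewrite rtrans_pow_succ, mag_pow_succ, smul_assoc, rep_rtrans, <- smul_assoc, IHn,
      smul_assoc.
    reflexivity.
  - rewrite rtrans_pow_pred, mag_pow_pred, smul_assoc, rep_rtrans_inv, <- smul_assoc, IHn,
      smul_assoc.
    reflexivity.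
Qed.

Lemma rep_word_act v x : smul (magnus v) (rep (word_act i x v)) = smul (rep x) (magnus v).
Proof.
  revert x; induction v as [|[b n] v IH]; intros x; cbn [magnus word_act].
  - rewrite smul_one_l, smul_one_r. reflexivity.
  - rewrite smul_assoc, IH, <- smul_assoc, rep_rtrans_pow, smul_assoc. reflexivity.
Qed.

Lemma rep_generated a v : rep (word_act i (i a) v) = magnus (conj_word v a).
Proof.
  rewrite magnus_conj_word, smul_assoc, <- rep_gen, <- rep_word_act, <- smul_assoc,
    magnus_word_inv_l, smul_one_l.
  reflexivity.
Qed.

Lemma rep_injective x y : rep x = rep y -> x = y.
Proof.
  destruct (Q_gen x) as [a [v ->]], (Q_gen y) as [b [w ->]].
  rewrite !rep_generated. intros E.
  assert (a = b) as <-.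
  { pose proof (f_equal (fun p => p [a]) E) as Ea. cbn beta in Ea.
    rewrite !magnus_single_coef, !exp_sum_conj_word in Ea.
    destruct (decide_eq a a), (decide_eq a b); congruence. }
  destruct (centralizer_conj_word v a (word_inv w ++ v)) as [k Hk].
  { unfold commutes. rewrite magnus_app, smul_assoc, magnus_conj_word_l, <- smul_assoc,
      <- magnus_conj_word_r, <- E, smul_assoc.
    reflexivity. }
  apply (word_act_wequiv i (i a)) in Hk. cbn in Hk. rewrite rtrans_pow_self in Hk.
  rewrite !app_assoc, !word_act_app, word_act_word_inv_r in Hk.
  rewrite <- (word_act_word_inv_l i (word_act i (i a) v) w), Hk. reflexivity.
Qed.

Lemma rep_op_cancel x y1 y2 :
  qop Q x y1 = qop Q x y2 ->
  forall inv2, smul (rep y2) inv2 = one -> smul inv2 (rep y2) = one ->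
  commutes (smul (rep y1) inv2) (rep x).
Proof.
  intros H inv2 HC2r HC2l. unfold commutes.
  assert (E : smul inv2 (rep x) = smul (rep (qop Q x y1)) inv2).
  { transitivity (smul (smul inv2 (smul (rep y2) (rep (qop Q x y2)))) inv2).
    - rewrite rep_op, !smul_assoc, HC2r, smul_one_r. reflexivity.
    - rewrite <- smul_assoc, HC2l, smul_one_l, H. reflexivity. }
  rewrite smul_assoc, E, <- smul_assoc, rep_op, !smul_assoc. reflexivity.
Qed.

Lemma rep_semi_latin : semi_latin Q.
Proof.
  intros x y1 y2 H. apply rep_injective.
  pose proof (rep_op_cancel x y1 y2 H) as Hc.
  destruct (Q_gen x) as [a [v ->]], (Q_gen y1) as [b1 [w1 ->]], (Q_gen y2) as [b2 [w2 ->]].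
  rewrite !rep_generated in *.
  set (z := conj_word w1 b1 ++ word_inv (conj_word w2 b2)).
  destruct (centralizer_conj_word v a z) as [k Hk].
  { unfold z. rewrite magnus_app.
    apply Hc; [apply magnus_word_inv_r | apply magnus_word_inv_l]. }
  assert (k = 0) as ->.
  { apply (indicator_diff_multiple b1 b2 a). intros c.
    transitivity (exp_sum [(a, k)] c); [|cbn; destruct (decide_eq c a); ring].
    rewrite <- (exp_sum_wequiv _ _ c Hk). unfold z.
    rewrite !exp_sum_app, !exp_sum_word_inv, !exp_sum_conj_word. ring. }
  apply magnus_trivial_of_conj in Hk. unfold z in Hk. rewrite magnus_app in Hk.
  rewrite <- (smul_one_r (magnus (conj_word w1 b1))), <- (magnus_word_inv_l (conj_word w2 b2)),
    <- smul_assoc, Hk, smul_one_l.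
  reflexivity.
Qed.

End MagnusRepresentation.

Theorem theorem3p5 (S : Type) (Q : quandle) (i : S -> Q) :
  is_free_quandle S Q i -> right_orderable Q /\ semi_latin Q.
Proof.
  intros Hfree.
  destruct (Hfree (conj_quandle S) mag_unit) as [g [g_hom [g_gen _]]].
  pose proof (free_quandle_generated S Q i Hfree) as Q_gen.
  split.
  - apply (right_orderable_inj_hom Q (conj_quandle S) g g_hom).
    + intros x y E. apply (rep_injective i g g_hom g_gen Q_gen). congruence.
    + apply conj_quandle_right_orderable.
  - exact (rep_semi_latin i g g_hom g_gen Q_gen).
Qed.
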